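(* Fix $\omega_c>0$. For each integer $D\ge 1$ define the polynomial in $z^{-1}$ $$\psi_D(z):=\sum_{i=0}^{D-1}\frac{2\omega_c}{D\pi}\,\mathrm{sinc}\!\left(\frac{2\omega_c}{D\pi}\Big(i-\frac{D-1}{2}\Big)\right)z^{-i},$$ where $\mathrm{sinc}(x)=\sin(\pi x)/(\pi x)$ for $x\neq 0$ and $\mathrm{sinc}(0)=1$. Then for every fixed $\omega\in\mathbb{R}$, $$\lim_{D\to\infty}\left|\psi_D\!\left(e^{-2\mathrm{i}\omega/D}\right)\right|=\frac{\left|\mathrm{Si}(\omega+\omega_c)-\mathrm{Si}(\omega-\omega_c)\right|}{\pi}=:|\Psi(\omega)|,$$ where $\mathrm{Si}(s)=\int_0^s\frac{\sin\theta}{\theta}\,d\theta$ is the sine integral. Moreover $|\Psi(\omega)|\to 0$ as $\omega\to\pm\infty$, and consequently, for any fixed $\delta\in(0,1)$, the quantity $\frac{\delta^2|\Psi(\omega)|^2}{1-\delta^2|\Psi(\omega)|^2}$ tends to $0$ as $\omega\to\pm\infty$.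
   Context: Here $e^{-2\mathrm{i}\omega/D}$ is the point $z(\omega)=e^{-2\mathrm{i}\omega\epsilon}$ with $\epsilon=1/D$, which lies on the unit circle for real $\omega$. *)

From Stdlib Require Import Reals Lra.
Open Scope R_scope.

Definition sinc (x : R) : R :=
  if Req_EM_T x 0 then 1 else sin (PI * x) / (PI * x).

Definition sin_over (t : R) : R :=
  if Req_EM_T t 0 then 1 else sin t / t.

Lemma continuity_sin_over : continuity sin_over.
Proof.
  intro x. destruct (Req_EM_T x 0) as [->|Hx].
  - intros eps Heps. destruct (derivable_pt_lim_sin_0 eps Heps) as [d Hd].
    exists d; split; [apply cond_pos|].
    intros y [_ Hy]. unfold Rdist, R_dist in *. simpl in *. unfold sin_over.
    destruct (Req_EM_T 0 0) as [_|C]; [|now elim C].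
    destruct (Req_EM_T y 0) as [->|Hy0].
    + unfold Rdist; replace (1 - 1) with 0 by ring; rewrite Rabs_R0; exact Heps.
    + replace (sin y / y) with ((sin (0 + y) - sin 0) / y)
        by (rewrite Rplus_0_l, sin_0; unfold Rdiv; ring).
      unfold Rdist in *. apply Hd; [exact Hy0|]. now rewrite Rminus_0_r in Hy.
  - apply continuity_pt_locally_ext with (f := fun t => sin t / t) (a := Rabs x).
    + now apply Rabs_pos_lt.
    + intros y Hy. unfold sin_over. destruct (Req_EM_T y 0) as [->|]; [|reflexivity].
      exfalso. rewrite Rdist_sym in Hy. unfold Rdist in Hy. rewrite Rminus_0_r in Hy. lra.
    + apply continuity_pt_div; [apply continuity_sin|apply derivable_continuous_pt, derivable_pt_id|exact Hx].
Qed.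

Lemma Si_integrable (s : R) : Riemann_integrable sin_over 0 s.
Proof.
  destruct (Rle_dec 0 s) as [H|H].
  - apply continuity_implies_RiemannInt; [exact H|]. intros; apply continuity_sin_over.
  - apply RiemannInt_P1, continuity_implies_RiemannInt; [lra|].
    intros; apply continuity_sin_over.
Qed.

Definition Si (s : R) : R := RiemannInt (Si_integrable s).

Definition psi_coef (wc : R) (D i : nat) : R :=
  (2 * wc / (INR D * PI)) *
  sinc ((2 * wc / (INR D * PI)) * (INR i - (INR D - 1) / 2)).

(* psi_D evaluated at z = exp(-2 i w / D): then z^{-i} = cos(2 w i / D) + i sin(2 w i / D).
   Real and imaginary parts, and the complex modulus sqrt(Re^2 + Im^2). *)
Definition psi_re (wc : R) (D : nat) (w : R) : R :=
  sum_f_R0 (fun i => psi_coef wc D i * cos (2 * w * INR i / INR D)) (D - 1).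
Definition psi_im (wc : R) (D : nat) (w : R) : R :=
  sum_f_R0 (fun i => psi_coef wc D i * sin (2 * w * INR i / INR D)) (D - 1).
Definition psi_abs (wc : R) (D : nat) (w : R) : R :=
  sqrt (psi_re wc D w ^ 2 + psi_im wc D w ^ 2).

Definition Psi (wc w : R) : R := (Si (w + wc) - Si (w - wc)) / PI.

(* With z = exp(-2 i w / D), the coefficients of psi_D sampled at the midpoints
   t_i = (i + 1/2)/D - 1/2 of a uniform subdivision of [-1/2, 1/2] turn psi_D(z)
   into a unimodular phase times the midpoint Riemann sum of
   K(t) e^{2 i w t}, where K(t) = (2 wc / pi) sin(2 wc t) / (2 wc t).
   The sum converges to the integral; its imaginary part vanishes by oddness and,
   by the product-to-sum formula, its real part is (Si(w + wc) - Si(w - wc)) / pi.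
   The decay of Psi at infinity comes from integrating sin t / t by parts
   against -cos t / t, which bounds the integral over [a, b] by 2/a + (b - a)/a^2. *)

From Stdlib Require Import Reals Lra Lia.
From Coquelicot Require Import Coquelicot.
Open Scope R_scope.

Lemma continuous_sin_over_scal (c x : R) : continuous (fun t => sin_over (c * t)) x.
Proof.
  apply (continuous_comp (fun t => c * t) sin_over).
  - apply (@ex_derive_continuous R_AbsRing R_NormedModule). auto_derive. auto.
  - apply continuity_pt_filterlim, continuity_sin_over.
Qed.

Lemma continuous_scal_sin_over_scal (K c x : R) :
  continuous (fun t => K * sin_over (c * t)) x.
Proof.
  apply (continuous_mult (fun _ => K)); [apply continuous_const|].
  apply continuous_sin_over_scal.
Qed.

Lemma ex_RInt_continuous_R (f : R -> R) a b :
  (forall x, continuous f x) -> ex_RInt f a b.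
Proof. intro Hf. apply (@ex_RInt_continuous R_CompleteNormedModule). auto. Qed.

Lemma ex_RInt_sin_over a b : ex_RInt sin_over a b.
Proof.
  apply ex_RInt_continuous_R. intro x.
  apply continuity_pt_filterlim, continuity_sin_over.
Qed.

Lemma sin_over_opp t : sin_over (- t) = sin_over t.
Proof.
  unfold sin_over. destruct (Req_EM_T (-t) 0); destruct (Req_EM_T t 0); try lra.
  rewrite sin_neg. field. auto.
Qed.

Lemma Si_RInt s : Si s = RInt sin_over 0 s.
Proof. unfold Si. now rewrite (RInt_Reals sin_over 0 s (Si_integrable s)). Qed.

Lemma Si_sub a b : Si b - Si a = RInt sin_over a b.
Proof.
  rewrite !Si_RInt, <- (RInt_Chasles (V:=R_CompleteNormedModule) sin_over 0 a b)
    by apply ex_RInt_sin_over.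
  unfold plus; simpl. ring.
Qed.

Lemma RInt_opp_odd (f : R -> R) (c : R) :
  (forall t, f (- t) = - f t) -> ex_RInt f (- c) c -> RInt f (- c) c = 0.
Proof.
  intros Hodd Hf.
  assert (Hrefl := RInt_comp_lin (V:=R_CompleteNormedModule) f (-1) 0 (- c) c).
  replace (-1 * - c + 0) with c in Hrefl by ring.
  replace (-1 * c + 0) with (- c) in Hrefl by ring.
  specialize (Hrefl (ex_RInt_swap _ _ _ Hf)).
  rewrite <- (opp_RInt_swap (V:=R_CompleteNormedModule) f (- c) c Hf) in Hrefl.
  rewrite (RInt_ext _ f) in Hrefl.
  - unfold opp in Hrefl; simpl in Hrefl. lra.
  - intros t _. unfold scal; simpl; unfold mult; simpl.
    replace (-1 * t + 0) with (- t) by ring. rewrite Hodd. ring.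
Qed.

Lemma Si_opp s : Si (- s) = - Si s.
Proof.
  rewrite !Si_RInt.
  assert (Hrefl := RInt_comp_lin sin_over (-1) 0 0 s).
  replace (-1 * 0 + 0) with 0 in Hrefl by ring.
  replace (-1 * s + 0) with (- s) in Hrefl by ring.
  rewrite <- Hrefl by apply ex_RInt_sin_over.
  rewrite (RInt_ext _ (fun t => scal (-1) (sin_over t))).
  - rewrite (RInt_scal (V:=R_CompleteNormedModule)) by apply ex_RInt_sin_over.
    unfold scal; simpl; unfold mult; simpl. ring.
  - intros t _. replace (-1 * t + 0) with (- t) by ring. now rewrite sin_over_opp.
Qed.

Lemma RInt_dilated_sin_over (a : R) :
  RInt (fun t => a * sin_over (2 * a * t)) (- (1/2)) (1/2) = Si a.
Proof.
  assert (Hdil := RInt_comp_lin (V:=R_CompleteNormedModule)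
                    sin_over (2 * a) 0 (- (1/2)) (1/2) (ex_RInt_sin_over _ _)).
  replace (2 * a * - (1/2) + 0) with (- a) in Hdil by field.
  replace (2 * a * (1/2) + 0) with a in Hdil by field.
  rewrite (RInt_ext _ (fun t => scal (/2) (scal (2 * a) (sin_over (2 * a * t + 0))))).
  2: { intros t _. unfold scal; simpl; unfold mult; simpl. rewrite Rplus_0_r. field. }
  rewrite (RInt_scal (V:=R_CompleteNormedModule)).
  2: { apply ex_RInt_continuous_R. intro x.
       apply (continuous_ext (fun t => 2 * a * sin_over (2 * a * t))).
       - intro t. now rewrite Rplus_0_r.
       - apply continuous_scal_sin_over_scal. }
  transitivity (scal (/2) (RInt sin_over (- a) a)); [f_equal; exact Hdil|].
  rewrite <- (RInt_Chasles (V:=R_CompleteNormedModule) sin_over (- a) 0 a)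
    by apply ex_RInt_sin_over.
  rewrite <- (opp_RInt_swap (V:=R_CompleteNormedModule)) by apply ex_RInt_sin_over.
  rewrite <- !Si_RInt, Si_opp.
  unfold scal, plus, opp; simpl; unfold mult, plus, opp; simpl. field.
Qed.

(* Integration by parts against [-cos t / t]. *)
Lemma RInt_sin_over_tail a b :
  0 < a <= b -> Rabs (RInt sin_over a b) <= 2 / a + (b - a) / (a * a).
Proof.
  intros [Ha Hab].
  set (G := fun t => - cos t / t).
  set (dG := fun t => sin t / t + cos t / (t * t)).
  set (q := fun t => cos t / (t * t)).
  assert (HdG : is_RInt dG a b (minus (G b) (G a))).
  { apply (is_RInt_derive (V:=R_CompleteNormedModule));
      intros x Hx; rewrite Rmin_left, Rmax_right in Hx by lra.
    - unfold G, dG. auto_derive; [lra|]. field. lra.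
    - apply (@ex_derive_continuous R_AbsRing R_NormedModule).
      unfold dG. auto_derive. repeat split; nra. }
  assert (Hsplit : forall x, Rmin a b < x < Rmax a b -> minus (dG x) (sin_over x) = q x).
  { intros x Hx. rewrite Rmin_left, Rmax_right in Hx by lra.
    unfold dG, q, sin_over. destruct (Req_EM_T x 0); [lra|].
    unfold minus, plus, opp; simpl. ring. }
  assert (Hq : ex_RInt q a b).
  { apply (ex_RInt_ext (V:=R_NormedModule) _ q a b Hsplit).
    apply (ex_RInt_minus (V:=R_NormedModule)); [eexists; exact HdG|apply ex_RInt_sin_over]. }
  assert (Hparts : RInt sin_over a b = minus (minus (G b) (G a)) (RInt q a b)).
  { rewrite <- (is_RInt_unique _ _ _ _ HdG).
    rewrite <- (RInt_minus (V:=R_CompleteNormedModule)) by (try (eexists; exact HdG); exact Hq).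
    apply RInt_ext. intros x Hx. rewrite <- Hsplit by exact Hx.
    unfold minus, plus, opp; simpl. ring. }
  assert (HGb : Rabs (G b) <= 1 / a).
  { unfold G. rewrite Rabs_div, Rabs_Ropp, (Rabs_pos_eq b) by lra.
    assert (Hcos := COS_bound b). apply Rabs_le in Hcos.
    apply Rle_trans with (1 / b); [|apply Rmult_le_compat_l, Rinv_le_contravar; lra].
    apply Rmult_le_compat_r; [left; apply Rinv_0_lt_compat|]; lra. }
  assert (HGa : Rabs (G a) <= 1 / a).
  { unfold G. rewrite Rabs_div, Rabs_Ropp, (Rabs_pos_eq a) by lra.
    assert (Hcos := COS_bound a). apply Rabs_le in Hcos.
    apply Rmult_le_compat_r; [left; apply Rinv_0_lt_compat|]; lra. }
  assert (HRq : Rabs (RInt q a b) <= (b - a) * (1 / (a * a))).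
  { apply (abs_RInt_le_const q a b); [lra|exact Hq|].
    intros t Ht. unfold q. rewrite Rabs_div, (Rabs_pos_eq (t * t)) by nra.
    assert (Hcos := COS_bound t). apply Rabs_le in Hcos.
    apply Rle_trans with (1 / (t * t)).
    - apply Rmult_le_compat_r; [left; apply Rinv_0_lt_compat; nra|lra].
    - apply Rmult_le_compat_l, Rinv_le_contravar; nra. }
  rewrite Hparts. unfold minus, plus, opp; simpl.
  replace ((b - a) / (a * a)) with ((b - a) * (1 / (a * a))) by (field; lra).
  replace (2 / a) with (1 / a + 1 / a) by (field; lra).
  eapply Rle_trans; [apply Rabs_triang|]. rewrite Rabs_Ropp.
  apply Rplus_le_compat; [|exact HRq].
  eapply Rle_trans; [apply Rabs_triang|]. rewrite Rabs_Ropp. lra.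
Qed.

Definition midpoint (a b : R) (n i : nat) : R :=
  a + (INR i + /2) * (b - a) / (INR n + 1).

Definition midpoint_sum (f : R -> R) (a b : R) (n : nat) : R :=
  sum_f_R0 (fun i => (b - a) / (INR n + 1) * f (midpoint a b n i)) n.

Lemma mkseq_S (h : nat -> R) k :
  seq.mkseq h (S k) = cons (h O) (seq.mkseq (fun i => h (S i)) k).
Proof.
  unfold seq.mkseq. simpl. f_equal.
  generalize 0%nat. induction k as [|k IH]; intro m; simpl; [reflexivity|].
  f_equal. apply IH.
Qed.

Lemma Riemann_sum_f2_cons (f : R -> R) (g : R -> R -> R) x0 x1 l :
  Riemann_sum f (SF_seq_f2 g (cons x0 (cons x1 l))) =
  (x1 - x0) * f (g x0 x1) + Riemann_sum f (SF_seq_f2 g (cons x1 l)).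
Proof. rewrite SF_cons_f2, Riemann_sum_cons by (simpl; lia). reflexivity. Qed.

Lemma Riemann_sum_mkseq (f : R -> R) (g : R -> R -> R) n (h : nat -> R) :
  Riemann_sum f (SF_seq_f2 g (seq.mkseq h (S (S n)))) =
  sum_f_R0 (fun i => (h (S i) - h i) * f (g (h i) (h (S i)))) n.
Proof.
  revert h. induction n as [|n IH]; intro h; rewrite mkseq_S, mkseq_S.
  - simpl seq.mkseq. rewrite Riemann_sum_f2_cons.
    unfold Riemann_sum. simpl. unfold zero; simpl. ring.
  - rewrite Riemann_sum_f2_cons, <- (mkseq_S (fun i => h (S i)) (S n)), IH.
    rewrite (decomp_sum _ (S n)) by lia. reflexivity.
Qed.

Lemma midpoint_sum_cvg (f : R -> R) a b :
  a < b -> ex_RInt f a b -> Un_cv (midpoint_sum f a b) (RInt f a b).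
Proof.
  intros Hab Hf eps Heps.
  destruct (RInt_correct (V:=R_CompleteNormedModule) f a b Hf _
              (locally_ball (RInt f a b) (mkposreal eps Heps))) as [delta Hdelta].
  assert (Hmesh : 0 < delta / (b - a)) by (apply Rdiv_lt_0_compat; [apply cond_pos|lra]).
  destruct (archimed_cor1 _ Hmesh) as [N [HN HN0]].
  exists N. intros n Hn.
  assert (HnN : 0 < INR N <= INR n) by (split; [apply lt_0_INR|apply le_INR]; lia).
  destruct (Riemann_fine_unif_part (fun x y => (x + y) / 2) a b n)
    as [Hstep [Hptd [Hfirst Hlast]]]; [intros; lra|lra|].
  assert (Hfine : seq_step (SF_lx (SF_seq_f2 (fun x y => (x + y) / 2) (unif_part a b n)))
                  < delta).
  { eapply Rle_lt_trans; [exact Hstep|].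
    apply Rle_lt_trans with ((b - a) / INR N).
    - apply Rmult_le_compat_l, Rinv_le_contravar; lra.
    - apply Rmult_lt_reg_r with (/ (b - a)); [apply Rinv_0_lt_compat; lra|].
      replace ((b - a) / INR N * / (b - a)) with (/ INR N) by (field; lra). exact HN. }
  specialize (Hdelta _ Hfine (conj Hptd (conj
    (eq_trans Hfirst (eq_sym (Rmin_left _ _ (Rlt_le _ _ Hab))))
    (eq_trans Hlast (eq_sym (Rmax_right _ _ (Rlt_le _ _ Hab))))))).
  rewrite sign_eq_1 in Hdelta by lra.
  unfold scal, ball in Hdelta; simpl in Hdelta.
  unfold mult, AbsRing_ball, abs, minus, plus, opp in Hdelta; simpl in Hdelta.
  rewrite Rmult_1_l in Hdelta. unfold unif_part in Hdelta.
  rewrite Riemann_sum_mkseq in Hdelta.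
  unfold R_dist, midpoint_sum. erewrite sum_eq; [exact Hdelta|].
  intros i _. cbv beta. unfold midpoint. rewrite S_INR.
  f_equal; [field|f_equal; field]; lra.
Qed.

Definition sinc_kernel (wc t : R) : R := 2 * wc / PI * sin_over (2 * wc * t).

Definition phase (n : nat) (w : R) : R := w * INR n / (INR n + 1).

Lemma sinc_sin_over y : sinc y = sin_over (PI * y).
Proof.
  unfold sinc, sin_over. assert (HPI := PI_RGT_0).
  destruct (Req_EM_T y 0) as [Hy|Hy]; destruct (Req_EM_T (PI * y) 0) as [H|H];
    try reflexivity.
  - exfalso. apply H. rewrite Hy. ring.
  - exfalso. apply Rmult_integral in H. destruct H; lra.
Qed.

Lemma psi_coef_midpoint wc n i :
  psi_coef wc (S n) i =
  1 / (INR n + 1) * sinc_kernel wc (midpoint (- (1/2)) (1/2) n i).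
Proof.
  unfold psi_coef, sinc_kernel, midpoint. rewrite sinc_sin_over, S_INR.
  assert (HPI := PI_RGT_0). assert (Hn := pos_INR n).
  replace (PI * (2 * wc / ((INR n + 1) * PI) * (INR i - (INR n + 1 - 1) / 2)))
    with (2 * wc * (- (1/2) + (INR i + /2) * (1/2 - - (1/2)) / (INR n + 1)))
    by (field; lra).
  field. lra.
Qed.

Lemma psi_angle_midpoint n i w :
  2 * w * INR i / INR (S n) = 2 * w * midpoint (- (1/2)) (1/2) n i + phase n w.
Proof.
  unfold midpoint, phase. rewrite S_INR. assert (Hn := pos_INR n). field. lra.
Qed.

Lemma sum_f_R0_lin (u v : nat -> R) (al be : R) n :
  sum_f_R0 (fun i => al * u i + be * v i) n = al * sum_f_R0 u n + be * sum_f_R0 v n.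
Proof. induction n as [|n IH]; simpl; [|rewrite IH]; ring. Qed.

Lemma sqrt_rotation (c s A B : R) :
  c ^ 2 + s ^ 2 = 1 ->
  sqrt ((c * A - s * B) ^ 2 + (s * A + c * B) ^ 2) = sqrt (A ^ 2 + B ^ 2).
Proof.
  intro Hunit. f_equal.
  transitivity ((c ^ 2 + s ^ 2) * (A ^ 2 + B ^ 2)); [ring|rewrite Hunit; ring].
Qed.

Section Filter.

Variables wc w : R.

Let K_cos t := sinc_kernel wc t * cos (2 * w * t).
Let K_sin t := sinc_kernel wc t * sin (2 * w * t).
Let RS f n := midpoint_sum f (- (1/2)) (1/2) n.

Lemma psi_abs_midpoint_sum n :
  psi_abs wc (S n) w = sqrt (RS K_cos n ^ 2 + RS K_sin n ^ 2).
Proof.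
  assert (Hre : psi_re wc (S n) w =
                cos (phase n w) * RS K_cos n - sin (phase n w) * RS K_sin n).
  { unfold psi_re, RS, midpoint_sum. replace (S n - 1)%nat with n by lia.
    replace (1/2 - - (1/2)) with 1 by lra.
    unfold Rminus. rewrite Ropp_mult_distr_l, <- sum_f_R0_lin.
    apply sum_eq. intros i _.
    rewrite psi_coef_midpoint, psi_angle_midpoint, cos_plus. unfold K_cos, K_sin. ring. }
  assert (Him : psi_im wc (S n) w =
                sin (phase n w) * RS K_cos n + cos (phase n w) * RS K_sin n).
  { unfold psi_im, RS, midpoint_sum. replace (S n - 1)%nat with n by lia.
    replace (1/2 - - (1/2)) with 1 by lra.
    rewrite <- sum_f_R0_lin. apply sum_eq. intros i _.
    rewrite psi_coef_midpoint, psi_angle_midpoint, sin_plus. unfold K_cos, K_sin. ring. }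
  unfold psi_abs. rewrite Hre, Him. apply sqrt_rotation.
  rewrite <- (sin2_cos2 (phase n w)). unfold Rsqr. ring.
Qed.

Lemma continuous_sinc_kernel x : continuous (sinc_kernel wc) x.
Proof. apply continuous_scal_sin_over_scal. Qed.

Lemma ex_RInt_K_cos a b : ex_RInt K_cos a b.
Proof.
  apply ex_RInt_continuous_R. intro x.
  apply (continuous_mult (sinc_kernel wc)); [apply continuous_sinc_kernel|].
  apply (@ex_derive_continuous R_AbsRing R_NormedModule). auto_derive. auto.
Qed.

Lemma ex_RInt_K_sin a b : ex_RInt K_sin a b.
Proof.
  apply ex_RInt_continuous_R. intro x.
  apply (continuous_mult (sinc_kernel wc)); [apply continuous_sinc_kernel|].
  apply (@ex_derive_continuous R_AbsRing R_NormedModule). auto_derive. auto.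
Qed.

Lemma RInt_K_sin : RInt K_sin (- (1/2)) (1/2) = 0.
Proof.
  apply RInt_opp_odd; [|apply ex_RInt_K_sin].
  intro t. unfold K_sin, sinc_kernel.
  replace (2 * wc * - t) with (- (2 * wc * t)) by ring.
  replace (2 * w * - t) with (- (2 * w * t)) by ring.
  rewrite sin_over_opp, sin_neg. ring.
Qed.

Lemma dilated_sin_over a t :
  t <> 0 -> a * sin_over (2 * a * t) = sin (2 * a * t) / (2 * t).
Proof.
  intro Ht. unfold sin_over. destruct (Req_EM_T (2 * a * t) 0) as [H|H].
  - rewrite H, sin_0.
    apply Rmult_integral in H. destruct H as [H|H]; [|contradiction].
    replace a with 0 by lra. field. auto.
  - field. split; auto. intro Ha. apply H. rewrite Ha. ring.
Qed.

(* Product-to-sum: 2 sin(2 wc t) cos(2 w t) = sin(2 (wc + w) t) + sin(2 (wc - w) t). *)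
Lemma K_cos_product_to_sum t :
  K_cos t = / PI * ((wc + w) * sin_over (2 * (wc + w) * t)
                    + (wc - w) * sin_over (2 * (wc - w) * t)).
Proof.
  assert (HPI := PI_RGT_0). unfold K_cos, sinc_kernel.
  destruct (Req_EM_T t 0) as [->|Ht].
  - rewrite !Rmult_0_r. unfold sin_over.
    destruct (Req_EM_T 0 0) as [_|C]; [|lra]. rewrite cos_0. field. lra.
  - replace (2 * wc / PI * sin_over (2 * wc * t))
      with (2 / PI * (wc * sin_over (2 * wc * t))) by (field; lra).
    rewrite !dilated_sin_over by exact Ht.
    replace (2 * (wc + w) * t) with (2 * wc * t + 2 * w * t) by ring.
    replace (2 * (wc - w) * t) with (2 * wc * t - 2 * w * t) by ring.
    rewrite sin_plus, sin_minus. field. lra.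
Qed.

Lemma RInt_K_cos : RInt K_cos (- (1/2)) (1/2) = Psi wc w.
Proof.
  set (D a t := a * sin_over (2 * a * t)).
  assert (HD : forall a, ex_RInt (D a) (- (1/2)) (1/2)).
  { intro a. apply ex_RInt_continuous_R. intro x. apply continuous_scal_sin_over_scal. }
  rewrite (RInt_ext _ (fun t => scal (/ PI) (plus (D (wc + w) t) (D (wc - w) t)))).
  2: { intros t _. apply K_cos_product_to_sum. }
  rewrite (RInt_scal (V:=R_CompleteNormedModule))
    by (apply (ex_RInt_plus (V:=R_CompleteNormedModule)); apply HD).
  rewrite (RInt_plus (V:=R_CompleteNormedModule)) by apply HD.
  unfold D. rewrite !RInt_dilated_sin_over.
  unfold Psi. replace (w - wc) with (- (wc - w)) by ring. rewrite Si_opp.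
  unfold scal, plus; simpl; unfold mult, plus; simpl.
  replace (w + wc) with (wc + w) by ring. field. apply Rgt_not_eq, PI_RGT_0.
Qed.

Lemma psi_abs_cvg : Un_cv (fun n => psi_abs wc (S n) w) (Rabs (Psi wc w)).
Proof.
  assert (Hhalf : - (1/2) < 1/2) by lra.
  assert (Hcos := midpoint_sum_cvg _ _ _ Hhalf (ex_RInt_K_cos (- (1/2)) (1/2))).
  assert (Hsin := midpoint_sum_cvg _ _ _ Hhalf (ex_RInt_K_sin (- (1/2)) (1/2))).
  rewrite RInt_K_cos in Hcos. rewrite RInt_K_sin in Hsin.
  assert (Hsq := CV_plus _ _ _ _ (CV_mult _ _ _ _ Hcos Hcos) (CV_mult _ _ _ _ Hsin Hsin)).
  apply continuity_seq with (f := sqrt) in Hsq; [|apply continuity_pt_sqrt; nra].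
  rewrite Rmult_0_l, Rplus_0_r in Hsq. fold (Rsqr (Psi wc w)) in Hsq.
  rewrite sqrt_Rsqr_abs in Hsq.
  intros eps Heps. destruct (Hsq eps Heps) as [N HN]. exists N. intros n Hn.
  rewrite psi_abs_midpoint_sum, <- !Rsqr_pow2. now apply HN.
Qed.

End Filter.

Lemma Psi_opp wc w : Psi wc (- w) = Psi wc w.
Proof.
  unfold Psi. replace (- w + wc) with (- (w - wc)) by ring.
  replace (- w - wc) with (- (w + wc)) by ring.
  rewrite !Si_opp. f_equal. ring.
Qed.

Lemma Rabs_Psi_le wc w :
  0 <= wc < w ->
  Rabs (Psi wc w) <= (2 / (w - wc) + 2 * wc / ((w - wc) * (w - wc))) / PI.
Proof.
  intros Hw. assert (HPI := PI_RGT_0).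
  unfold Psi. rewrite Rabs_div, (Rabs_pos_eq PI), Si_sub by lra.
  apply Rmult_le_compat_r; [left; apply Rinv_0_lt_compat; lra|].
  replace (2 * wc) with (w + wc - (w - wc)) by ring.
  apply RInt_sin_over_tail. lra.
Qed.

Lemma Psi_vanishes_at_infinity wc :
  0 <= wc -> forall eps, 0 < eps ->
  exists M, forall w, M < Rabs w -> Rabs (Psi wc w) < eps.
Proof.
  intros Hwc eps Heps.
  set (c := 2 + 2 * wc).
  assert (Hc : 0 < c / eps) by (apply Rdiv_lt_0_compat; unfold c; lra).
  exists (wc + 1 + c / eps). intros w Hw.
  assert (Habs : Psi wc w = Psi wc (Rabs w)).
  { destruct (Rcase_abs w) as [Hneg|Hpos].
    - now rewrite (Rabs_left w Hneg), Psi_opp.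
    - now rewrite (Rabs_pos_eq w) by lra. }
  rewrite Habs. set (a := Rabs w - wc) in *.
  assert (Ha : 1 < a /\ c < eps * a).
  { split; [unfold a; lra|].
    replace c with (c / eps * eps) by (field; lra). unfold a. nra. }
  eapply Rle_lt_trans; [apply Rabs_Psi_le; lra|]. fold a.
  assert (HPI : 1 < PI) by (assert (H := PI2_1); lra).
  assert (Hia : 0 < / a < 1).
  { split; [apply Rinv_0_lt_compat; lra|rewrite <- Rinv_1; apply Rinv_lt_contravar; lra]. }
  replace (2 / a + 2 * wc / (a * a)) with ((2 + 2 * wc * / a) * / a) by (field; lra).
  apply Rle_lt_trans with (c * / a).
  - apply Rle_trans with ((2 + 2 * wc * / a) * / a).
    + rewrite <- (Rmult_1_r ((2 + 2 * wc * / a) * / a)) at 2.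
      apply Rmult_le_compat_l; [nra|].
      rewrite <- Rinv_1. apply Rinv_le_contravar; lra.
    + apply Rmult_le_compat_r; unfold c; nra.
  - apply Rmult_lt_reg_r with a; [lra|]. rewrite Rmult_assoc, Rinv_l; lra.
Qed.

Lemma Rdiv_1_minus_le (q : R) : 0 <= q <= 1/2 -> q / (1 - q) <= 2 * q.
Proof.
  intros Hq. apply Rmult_le_reg_r with (1 - q); [lra|].
  unfold Rdiv. rewrite Rmult_assoc, Rinv_l by lra. nra.
Qed.

Lemma Rabs_ratio_small (delta p eps : R) :
  0 < delta < 1 -> 0 < eps -> Rabs p < Rmin (1/2) (eps / 4) ->
  Rabs (delta ^ 2 * Rabs p ^ 2 / (1 - delta ^ 2 * Rabs p ^ 2)) < eps.
Proof.
  intros Hdelta Heps Hp.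
  assert (H12 := Rmin_l (1/2) (eps / 4)). assert (Heps4 := Rmin_r (1/2) (eps / 4)).
  set (q := delta ^ 2 * Rabs p ^ 2).
  assert (Hq : 0 <= q <= Rabs p / 2 /\ Rabs p / 2 < eps / 8).
  { assert (Habs := Rabs_pos p). unfold q. simpl. rewrite !Rmult_1_r.
    assert (Hdd : 0 <= delta * delta <= 1) by nra.
    assert (Hpp : 0 <= Rabs p * Rabs p <= Rabs p / 2) by nra.
    split; [split|]; nra. }
  assert (Hratio := Rdiv_1_minus_le q ltac:(lra)).
  rewrite Rabs_pos_eq; [lra|].
  apply Rmult_le_pos; [lra|left; apply Rinv_0_lt_compat; lra].
Qed.

Theorem mainTheorem2 (wc : R) (hwc : 0 < wc) :
  (forall w : R, Un_cv (fun n : nat => psi_abs wc (S n) w) (Rabs (Psi wc w))) /\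
  (forall eps : R, 0 < eps -> exists M : R, forall w : R,
      M < Rabs w -> Rabs (Psi wc w) < eps) /\
  (forall delta : R, 0 < delta < 1 ->
    forall eps : R, 0 < eps -> exists M : R, forall w : R,
      M < Rabs w ->
      Rabs (delta ^ 2 * Rabs (Psi wc w) ^ 2 / (1 - delta ^ 2 * Rabs (Psi wc w) ^ 2)) < eps).
Proof.
  assert (Hdecay := Psi_vanishes_at_infinity wc (Rlt_le _ _ hwc)).
  split; [exact (psi_abs_cvg wc)|split; [exact Hdecay|]].
  intros delta Hdelta eps Heps.
  destruct (Hdecay (Rmin (1/2) (eps / 4))) as [M HM].
  { apply Rmin_pos; lra. }
  exists M. intros w Hw. apply Rabs_ratio_small; auto.
Qed.
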